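(* Let $\Theta\subset\mathbb{R}^p$ be a parameter set containing the true parameter $\theta^\star$. Let $\Phi_1,\dots,\Phi_{N_j}\in\mathbb{R}^{c\times p}$ be the regressor matrices evaluated at sampling times $t_1,\dots,t_{N_j}$ along a planned trajectory, and let $A\in\mathbb{R}^{M\times p}$, $M=N_jc$, be their vertical stack. Assume the executed trajectory equals the planned one, so that the stacked regressor of the executed samples is $A_{\mathrm{act}}=A$, and that the measurements satisfy $z_j=\Phi_j\theta^\star+w_j$ with $\|w_j\|_\infty\le\overline w$ for all $j$; write $z=A\theta^\star+w$ for the stacked data. Define $$\Theta_{\mathrm{act}}=\{\theta\in\Theta:\ \|z-A_{\mathrm{act}}\theta\|_\infty\le\overline w\},\quad \mathcal{E}_\theta=\{e\in\mathbb{R}^p:\|Ae\|_\infty\le 2\overline w\},\quad \Theta_{N_j}(\theta^\star)=\Theta\cap(\theta^\star+\mathcal{E}_\theta).$$ Then for every unit direction $d\in\mathbb{R}^p$, $$w_d(\Theta_{\mathrm{act}})\le w_d\big(\Theta_{N_j}(\theta^\star)\big)\le \min\big(w_d(\Theta),\,2h_{\mathcal{E}_\theta}(d)\big),$$ where $h_{\mathcal{E}_\theta}(d)=\sup_{e\in\mathcal{E}_\theta}d^\top e$ admits the exact dual form $$h_{\mathcal{E}_\theta}(d)=2\overline w\,\min_{\lambda\in\mathbb{R}^M:\ A^\top\lambda=d}\|\lambda\|_1 .$$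
   Context: For a set $\mathcal{C}\subset\mathbb{R}^p$ and a direction $d$, the width of $\mathcal{C}$ along $d$ is $w_d(\mathcal{C})=\sup_{x\in\mathcal{C}}d^\top x-\inf_{x\in\mathcal{C}}d^\top x$. The regressors come from a linear-in-parameter identification model $z(t)=\Phi(x,u)\theta+w(t)$ with $\|w(t)\|_\infty\le\overline w$. In the paper, $d$ ranges over a finite set $\mathcal{D}$ of unit directions. *)

From HB Require Import structures.
From mathcomp Require Import all_boot all_order all_algebra.
From mathcomp Require Import classical_sets boolp reals constructive_ereal ereal.
Set Implicit Arguments. Unset Strict Implicit. Unset Printing Implicit Defensive.
Import Order.TTheory GRing.Theory Num.Theory.
Local Open Scope ring_scope.
Local Open Scope classical_set_scope.

(* Vertical stacking of Nj blocks of c rows: row j*c + r of the stack is row r of block j. *)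
Lemma blk_lt (Nj c : nat) (i : 'I_(Nj * c)) : (i %/ c < Nj)%N.
Proof.
case: c i => [|c] i; first by case: i => i; rewrite muln0.
by rewrite ltn_divLR // ltn_ord.
Qed.

Lemma row_lt (Nj c : nat) (i : 'I_(Nj * c)) : (i %% c < c)%N.
Proof.
case: c i => [|c] i; first by case: i => i; rewrite muln0.
by rewrite ltn_mod.
Qed.

Definition blk (Nj c : nat) (i : 'I_(Nj * c)) : 'I_Nj := Ordinal (blk_lt i).
Definition rowin (Nj c : nat) (i : 'I_(Nj * c)) : 'I_c := Ordinal (row_lt i).

Definition stack (R : Type) (Nj c n : nat) (F : 'I_Nj -> 'M[R]_(c, n)) :
  'M[R]_(Nj * c, n) := \matrix_(i, k) F (blk i) (rowin i) k.

Definition dotv (R : ringType) (p : nat) (d x : 'cV[R]_p) : R :=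
  \sum_(k < p) d k 0 * x k 0.
Definition infnorm (R : realDomainType) (m : nat) (v : 'cV[R]_m) : R :=
  \big[Num.max/0]_(i < m) `|v i 0|.
Definition norm1 (R : realDomainType) (m : nat) (v : 'cV[R]_m) : R :=
  \sum_(i < m) `|v i 0|.
Definition unit_dir (R : realDomainType) (p : nat) (d : 'cV[R]_p) : Prop :=
  \sum_(k < p) d k 0 ^+ 2 = 1.

Definition width (R : realType) (p : nat) (d : 'cV[R]_p) (C : set 'cV[R]_p) : \bar R :=
  (ereal_sup [set (dotv d x)%:E | x in C] - ereal_inf [set (dotv d x)%:E | x in C])%E.

Definition hsupp (R : realType) (p : nat) (C : set 'cV[R]_p) (d : 'cV[R]_p) : \bar R :=
  ereal_sup [set (dotv d e)%:E | e in C].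

(* Since the executed regressor is the planned one, any parameter consistent with
   the data differs from theta_star by some e with |A e|_oo <= 2 wbar (triangle
   inequality through z), so Theta_act is contained in Theta_N; and theta_star + E
   is symmetric about theta_star, whence the width bound 2 h_E(d).
   The dual formula is l_oo/l_1 duality. Hoelder's inequality gives
   d^T e = lam^T (A e) <= 2 wbar |lam|_1 whenever A^T lam = d and e is in E.
   Conversely, if no lam with |lam|_1 <= t solves A^T lam = d, then d lies outside
   the compact convex set A^T {|lam|_1 <= t}; with x0 the nearest point of it,
   e = d - x0 satisfies t |A e|_oo <= e^T x0 < d^T e, so after rescaling
   h_E(d) > 2 wbar t.  Minimisers of |lam|_1 exist by compactness. *)

From HB Require Import structures.
From mathcomp Require Import all_boot all_order all_algebra.
From mathcomp Require Import classical_sets boolp reals constructive_ereal ereal.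
From mathcomp Require Import topology normedtype derive.
From mathcomp Require Import ring lra.
Import Order.TTheory GRing.Theory Num.Theory.
Import numFieldTopology.Exports numFieldNormedType.Exports.
Set Implicit Arguments. Unset Strict Implicit.
Local Open Scope ring_scope.
Local Open Scope classical_set_scope.

Section VectorNorms.
Variables (R : realDomainType) (m : nat).
Implicit Types (u v : 'cV[R]_m) (b k : R).

Lemma infnorm_ge0 v : 0 <= infnorm v.
Proof. by rewrite /infnorm; elim/big_ind: _ => //= x y; rewrite le_max => ->. Qed.

Lemma le_infnorm v i : `|v i 0| <= infnorm v.
Proof. exact: le_bigmax. Qed.

Lemma infnorm_le v b : 0 <= b -> (forall i, `|v i 0| <= b) -> infnorm v <= b.
Proof. by move=> b0 vb; apply: bigmax_le => // i _. Qed.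

Lemma infnorm0 : infnorm (0 : 'cV[R]_m) = 0.
Proof.
apply/le_anti; rewrite infnorm_ge0 andbT.
by apply: infnorm_le => // i; rewrite mxE normr0.
Qed.

Lemma infnormN v : infnorm (- v) = infnorm v.
Proof. by apply: eq_bigr => i _; rewrite mxE normrN. Qed.

Lemma infnormD u v : infnorm (u + v) <= infnorm u + infnorm v.
Proof.
apply: infnorm_le => [|i]; first by rewrite addr_ge0 ?infnorm_ge0.
by rewrite mxE (le_trans (ler_normD _ _)) ?lerD ?le_infnorm.
Qed.

Lemma infnormZ_le v k : infnorm (k *: v) <= `|k| * infnorm v.
Proof.
apply: infnorm_le => [|i]; first by rewrite mulr_ge0 ?infnorm_ge0.
by rewrite mxE normrM ler_wpM2l ?le_infnorm.
Qed.

Lemma norm1_ge0 v : 0 <= norm1 v.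
Proof. exact: sumr_ge0. Qed.

Lemma le_norm1 v i : `|v i 0| <= norm1 v.
Proof. by rewrite /norm1 (bigD1 i) //= lerDl sumr_ge0. Qed.

Lemma norm1_0 : norm1 (0 : 'cV[R]_m) = 0.
Proof. by rewrite /norm1 big1 // => i _; rewrite mxE normr0. Qed.

Lemma norm1_convex u v b : 0 <= b <= 1 ->
  norm1 ((1 - b) *: u + b *: v) <= (1 - b) * norm1 u + b * norm1 v.
Proof.
case/andP=> b0 b1; rewrite /norm1 !mulr_sumr -big_split /=.
apply: ler_sum => i _; rewrite !mxE (le_trans (ler_normD _ _)) //.
by rewrite !normrM (ger0_norm b0) ger0_norm ?subr_ge0.
Qed.

Lemma norm1_delta i k : norm1 (k *: delta_mx i 0 : 'cV[R]_m) = `|k|.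
Proof.
rewrite /norm1 (bigD1 i) //= big1 => [|j ji]; rewrite !mxE ?eqxx ?mulr1 ?addr0 //.
by rewrite (negbTE ji) mulr0 normr0.
Qed.

Lemma dotv_le_norm1_infnorm u v : dotv u v <= norm1 u * infnorm v.
Proof.
rewrite /dotv /norm1 mulr_suml; apply: ler_sum => i _.
by rewrite (le_trans (ler_norm _)) // normrM ler_wpM2l ?le_infnorm.
Qed.

End VectorNorms.

Section DotProduct.
Variables (R : comNzRingType) (p : nat).
Implicit Types (u v w : 'cV[R]_p) (k : R).

Lemma dotvE u v : dotv u v = (u^T *m v) 0 0.
Proof. by rewrite mxE; apply: eq_bigr => i _; rewrite mxE. Qed.

Lemma dotvC u v : dotv u v = dotv v u.
Proof. by apply: eq_bigr => i _; rewrite mulrC. Qed.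

Lemma dotv0r u : dotv u 0 = 0.
Proof. by rewrite /dotv big1 // => i _; rewrite mxE mulr0. Qed.

Lemma dotvBr u v w : dotv u (v - w) = dotv u v - dotv u w.
Proof. by rewrite /dotv -sumrB; apply: eq_bigr => i _; rewrite !mxE mulrBr. Qed.

Lemma dotvBl u v w : dotv (u - v) w = dotv u w - dotv v w.
Proof. by rewrite dotvC dotvBr !(dotvC w). Qed.

Lemma dotvZr u v k : dotv u (k *: v) = k * dotv u v.
Proof. by rewrite /dotv mulr_sumr; apply: eq_bigr => i _; rewrite mxE mulrCA. Qed.

Lemma dotvZl u v k : dotv (k *: u) v = k * dotv u v.
Proof. by rewrite dotvC dotvZr dotvC. Qed.

Lemma dotv_delta v i k : dotv v (k *: delta_mx i 0) = k * v i 0.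
Proof.
rewrite dotvZr /dotv (bigD1 i) //= big1 => [|j ji]; rewrite !mxE ?eqxx ?mulr1 ?addr0 //.
by rewrite (negbTE ji) mulr0.
Qed.

Lemma dotv_sqrB u v : dotv (u - v) (u - v) = dotv u u - 2 * dotv u v + dotv v v.
Proof. by rewrite !(dotvBl, dotvBr) (dotvC v u); ring. Qed.

End DotProduct.

Lemma dotv_trmx (R : comNzRingType) m p (B : 'M[R]_(m, p)) u v :
  dotv (B^T *m u) v = dotv u (B *m v).
Proof. by rewrite !dotvE trmx_mul trmxK mulmxA. Qed.

Lemma dotv_ge0 (R : realDomainType) p (v : 'cV[R]_p) : 0 <= dotv v v.
Proof. by apply: sumr_ge0 => i _; rewrite -expr2 sqr_ge0. Qed.

Lemma dotv_gt0 (R : realDomainType) p (v : 'cV[R]_p) : v != 0 -> 0 < dotv v v.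
Proof.
move=> v0; rewrite lt_neqAle dotv_ge0 andbT; apply: contra v0 => /eqP/esym/eqP.
rewrite psumr_eq0 => [/allP v0|i _]; last by rewrite -expr2 sqr_ge0.
apply/eqP/matrixP => i j; rewrite (ord1 j) !mxE.
by have /implyP/(_ isT) := v0 i (mem_index_enum _); rewrite mulf_eq0 orbb => /eqP.
Qed.

(* The library proves closed bounded sets compact only for row vectors
   (bounded_closed_compact), hence the transposes below. *)
Section RowVectorTopology.
Variables (R : realType) (m : nat).

Lemma continuous_sum (T : topologicalType) I (s : seq I) (F : I -> T -> R) :
  (forall i, continuous (F i)) -> continuous (fun x => \sum_(i <- s) F i x).
Proof.
move=> Fc; elim: s => [|i s IH].
  have -> : (fun x => \sum_(j <- [::]) F j x) = fun=> 0.
    by apply: funext => x; rewrite big_nil.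
  exact: cst_continuous.
have -> : (fun x => \sum_(j <- i :: s) F j x) = fun x => F i x + \sum_(j <- s) F j x.
  by apply: funext => x; rewrite big_cons.
move=> x; apply: (@continuousD _ R^o _ (F i) (fun x => \sum_(j <- s) F j x)).
  exact: Fc.
exact: IH.
Qed.

Lemma continuous_mulmx_trmx n (B : 'M[R]_(n, m)) k :
  continuous (fun v : 'rV[R]_m => (B *m v^T) k 0).
Proof.
have -> : (fun v : 'rV[R]_m => (B *m v^T) k 0) = fun v => \sum_i B k i * v 0 i.
  by apply: funext => v; rewrite mxE; apply: eq_bigr => i _; rewrite mxE.
apply: continuous_sum => i x.
apply: (@continuousM R _ (fun=> B k i) (fun v : 'rV[R]_m => v 0 i) x).
  exact: cst_continuous.
exact: coord_continuous.
Qed.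

Lemma continuous_norm1_trmx : continuous (fun v : 'rV[R]_m => norm1 v^T).
Proof.
have -> : (fun v : 'rV[R]_m => norm1 v^T) = fun v => \sum_i `|v 0 i|.
  by apply: funext => v; apply: eq_bigr => i _; rewrite mxE.
apply: continuous_sum => i x.
by apply: continuous_comp; [exact: coord_continuous | exact: norm_continuous].
Qed.

Lemma closed_mulmx_trmx_eq n (B : 'M[R]_(n, m)) (d : 'cV[R]_n) :
  closed [set v : 'rV[R]_m | B *m v^T = d].
Proof.
have -> : [set v : 'rV[R]_m | B *m v^T = d] =
    \bigcap_(k in setT) [set v | (B *m v^T) k 0 = d k 0].
  apply/seteqP; split=> [v Bvd k _|v Bvd]; first by rewrite /= Bvd.
  by apply/matrixP => k j; rewrite (ord1 j); exact: Bvd.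
apply: closed_bigI => k _.
apply: (@preimage_closed _ _ (fun v : 'rV[R]_m => (B *m v^T) k 0) [set y | y = d k 0]).
  by move=> v _; exact: continuous_mulmx_trmx.
exact: closed_eq.
Qed.

Lemma norm1_ball_argmin (S : set 'cV[R]_m) (f : 'cV[R]_m -> R) t :
  closed (S \o trmx) -> continuous (f \o trmx) ->
  (exists2 lam, S lam & norm1 lam <= t) ->
  exists2 lam, S lam /\ norm1 lam <= t &
    forall mu, S mu -> norm1 mu <= t -> f lam <= f mu.
Proof.
move=> Scl fc [lam Slam lamt].
pose K := (S \o trmx) `&` [set v : 'rV[R]_m | norm1 v^T <= t].
have Kcl : closed K.
  apply: closedI => //.
  apply: (@preimage_closed _ _ (fun v : 'rV[R]_m => norm1 v^T) [set y | y <= t]).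
    by move=> v _; exact: continuous_norm1_trmx.
  exact: closed_le.
have Kcpt : compact K.
  apply: bounded_closed_compact => //; exists t; split; first exact: num_real.
  move=> M tM v [_ Kv]; rewrite /Num.Def.normr /= mx_normrE.
  apply: bigmax_le => [|[i j] _]; first exact: le_trans (le_trans (norm1_ge0 _) lamt) (ltW tM).
  rewrite /= (ord1 i) (le_trans _ (ltW tM)) // (le_trans _ Kv) //.
  by have := le_norm1 v^T j; rewrite mxE.
have K0 : K !=set0 by exists lam^T; rewrite /K /= trmxK.
have [v Kv vmin] := EVT_min_rV K0 Kcpt (continuous_subspaceT fc).
move: Kv; rewrite inE => -[Sv vt].
exists v^T => // mu Smu mut.
by have := vmin mu^T; rewrite inE /K /= trmxK => /(_ (conj Smu mut)).
Qed.

Lemma continuous_sqr_dist_mulmx_trmx n (B : 'M[R]_(n, m)) (d : 'cV[R]_n) :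
  continuous (fun v : 'rV[R]_m => dotv (d - B *m v^T) (d - B *m v^T)).
Proof.
pose g k (v : 'rV[R]_m) := d k 0 - (B *m v^T) k 0.
have gc k : continuous (g k).
  move=> x; apply: (@continuousB _ R^o _ (fun=> d k 0) (fun v => (B *m v^T) k 0)).
    exact: cst_continuous.
  exact: continuous_mulmx_trmx.
have -> : (fun v : 'rV[R]_m => dotv (d - B *m v^T) (d - B *m v^T)) =
    fun v => \sum_k g k v * g k v.
  by apply: funext => v; apply: eq_bigr => k _; rewrite /g !mxE.
by apply: continuous_sum => k x; exact: (@continuousM R _ (g k) (g k) x (gc k x) (gc k x)).
Qed.

End RowVectorTopology.

Section Separation.
Variable R : realType.

Lemma projection_obtuse p (K : set 'cV[R]_p) (d x0 : 'cV[R]_p) :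
  (forall y s, K y -> 0 < s <= 1 -> K (x0 + s *: (y - x0))) ->
  (forall x, K x -> dotv (d - x0) (d - x0) <= dotv (d - x) (d - x)) ->
  forall y, K y -> dotv (d - x0) (y - x0) <= 0.
Proof.
move=> Kstar x0min y Ky; set e := d - x0; set u := y - x0.
have quad s : 0 < s <= 1 -> 2 * dotv e u <= s * dotv u u.
  move=> s01; have := x0min _ (Kstar y s Ky s01).
  have -> : d - (x0 + s *: u) = e - s *: u by rewrite opprD addrA.
  rewrite -/e [X in _ <= X]dotv_sqrB !(dotvZl, dotvZr) => le_es.
  have : 0 <= s * (s * dotv u u - 2 * dotv e u) by lra.
  by rewrite pmulr_rge0 ?subr_ge0 //; case/andP: s01.
rewrite leNgt; apply/negP => eu_gt0; have uu_ge0 := dotv_ge0 u.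
pose s := dotv e u / (dotv e u + dotv u u).
have s_gt0 : 0 < s by rewrite divr_gt0 // ltr_wpDr.
have s_le1 : s <= 1 by rewrite ler_pdivrMr ?mul1r ?lerDl // ltr_wpDr.
have s_eq : s * (dotv e u + dotv u u) = dotv e u by rewrite mulfVK // gt_eqF ?ltr_wpDr.
have := quad s; rewrite s_gt0 s_le1 => /(_ isT); nra.
Qed.

Lemma l1ball_support m (y : 'cV[R]_m) t c : 0 <= t ->
  (forall lam, norm1 lam <= t -> dotv lam y <= c) -> t * infnorm y <= c.
Proof.
move=> t_ge0 ley.
have c_ge0 : 0 <= c by rewrite -(dotv0r y) dotvC ley ?norm1_0.
have le_yi i : t * `|y i 0| <= c.
  have le_ky k : `|k| = t -> k * y i 0 <= c.
    by move=> kt; rewrite -dotv_delta dotvC ley // norm1_delta kt.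
  have [yi_ge0|yi_lt0] := lerP 0 (y i 0).
    by rewrite ger0_norm // le_ky // ger0_norm.
  by rewrite ltr0_norm // mulrN -mulNr le_ky // normrN ger0_norm.
move: t_ge0; rewrite le_eqVlt => /predU1P[<-|t_gt0]; first by rewrite mul0r.
rewrite -ler_pdivlMl //; apply: infnorm_le => [|i]; first by rewrite mulr_ge0 // invr_ge0 ltW.
by rewrite ler_pdivlMl.
Qed.

Lemma l1ball_image_separation m p (B : 'M[R]_(m, p)) d t : 0 <= t ->
  (forall lam, norm1 lam <= t -> B^T *m lam != d) ->
  exists e, t * infnorm (B *m e) < dotv d e.
Proof.
move=> t_ge0 nsol.
pose dist2 (x : 'cV[R]_p) := dotv (d - x) (d - x).
have ball0 : exists2 lam : 'cV[R]_m, setT lam & norm1 lam <= t.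
  by exists 0; rewrite ?norm1_0.
have [lam1 [_ lam1t] lam1min] := norm1_ball_argmin (f := fun lam => dist2 (B^T *m lam))
  closedT (@continuous_sqr_dist_mulmx_trmx _ _ _ B^T d) ball0.
set x0 := B^T *m lam1; set e := d - x0.
pose K := [set x | exists2 mu, norm1 mu <= t & x = B^T *m mu].
have Kstar y s : K y -> 0 < s <= 1 -> K (x0 + s *: (y - x0)).
  case=> mu mut -> /andP[s_gt0 s_le1]; exists ((1 - s) *: lam1 + s *: mu).
    have s01 : 0 <= s <= 1 by rewrite (ltW s_gt0) s_le1.
    apply: le_trans (norm1_convex lam1 mu s01) _.
    have : (1 - s) * norm1 lam1 <= (1 - s) * t by apply: ler_wpM2l; rewrite ?subr_ge0.
    nra.
  by rewrite mulmxDr -!scalemxAr -/x0 scalerBr scalerBl scale1r addrA addrAC.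
have obtuse lam : norm1 lam <= t -> dotv e (B^T *m lam - x0) <= 0.
  move=> lamt; apply: (projection_obtuse Kstar) => [_ [mu mut ->]|]; last by exists lam.
  exact: lam1min.
have supp : t * infnorm (B *m e) <= dotv e x0.
  apply: l1ball_support => // lam /obtuse.
  by rewrite dotvBr dotvC dotv_trmx subr_le0.
have e_neq0 : e != 0 by rewrite subr_eq0 eq_sym nsol.
have x0_e : dotv e x0 = dotv e d - dotv e e by rewrite -dotvBr /e opprB addrCA subrr addr0.
exists e; rewrite dotvC; have := dotv_gt0 e_neq0; lra.
Qed.

Lemma hsupp_infnorm_ball_gt m p (B : 'M[R]_(m, p)) d r t : 0 < r -> 0 <= t ->
  (forall lam, norm1 lam <= t -> B^T *m lam != d) ->
  ((r * t)%:E < hsupp [set e | (infnorm (B *m e) <= r)%R] d)%E.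
Proof.
move=> r_gt0 t_ge0 /(l1ball_image_separation t_ge0) [e lt_de].
suff [e' e'_in lt_de'] : exists2 e', infnorm (B *m e') <= r & r * t < dotv d e'.
  apply: (@lt_le_trans _ _ (dotv d e')%:E); first by rewrite lte_fin.
  by apply: ereal_sup_ubound; exists e'.
move: (infnorm_ge0 (B *m e)); rewrite le_eqVlt => /predU1P[n0|n_gt0].
  rewrite -n0 mulr0 in lt_de.
  exists (((r * t + 1) / dotv d e) *: e); last by rewrite dotvZr divfK ?gt_eqF //; lra.
  by rewrite -scalemxAr (le_trans (infnormZ_le _ _)) // -n0 mulr0 ltW.
set n := infnorm (B *m e) in lt_de n_gt0 *.
have k_gt0 : 0 < r / n by rewrite divr_gt0.
exists ((r / n) *: e).
  by rewrite -scalemxAr (le_trans (infnormZ_le _ _)) // gtr0_norm // divfK ?gt_eqF.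
have -> : r * t = r / n * (t * n) by field; rewrite gt_eqF.
by rewrite dotvZr ltr_pM2l.
Qed.

Lemma hsupp_infnorm_ball_ge m p (B : 'M[R]_(m, p)) d r T : 0 < r ->
  (forall lam, B^T *m lam = d -> T <= norm1 lam) ->
  ((r * T)%:E <= hsupp [set e | (infnorm (B *m e) <= r)%R] d)%E.
Proof.
move=> r_gt0 lb; set E := [set e | _].
have : (0 <= hsupp E d)%E.
  apply: ereal_sup_ubound; exists 0; last by rewrite dotv0r.
  by rewrite /E /= mulmx0 infnorm0 ltW.
case Eh : (hsupp E d) => [h| |] h_ge0 //; last by rewrite leey.
rewrite lee_fin leNgt; apply/negP => h_lt.
have t_ge0 : 0 <= h / r by rewrite divr_ge0 // ltW.
have nsol lam : norm1 lam <= h / r -> B^T *m lam != d.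
  move=> lamt; apply/eqP => /lb T_le.
  by have := le_trans T_le lamt; rewrite ler_pdivlMr // mulrC leNgt h_lt.
have := hsupp_infnorm_ball_gt r_gt0 t_ge0 nsol.
by rewrite -/E Eh lte_fin mulrC divfK ?gt_eqF // ltxx.
Qed.

Definition min_norm1_sol m p (B : 'M[R]_(m, p)) (d : 'cV[R]_p) : \bar R :=
  ereal_inf [set (norm1 lam)%:E | lam in [set lam | B^T *m lam = d]].

Lemma norm1_sol_argmin m p (B : 'M[R]_(m, p)) d : (exists lam, B^T *m lam = d) ->
  exists2 lam0, B^T *m lam0 = d & forall lam, B^T *m lam = d -> norm1 lam0 <= norm1 lam.
Proof.
case=> lam1 sol1.
have feas : exists2 lam, B^T *m lam = d & norm1 lam <= norm1 lam1 by exists lam1.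
have [lam0 [sol0 _] lam0min] := norm1_ball_argmin (S := fun lam => B^T *m lam = d)
  (f := @norm1 R m) (@closed_mulmx_trmx_eq _ _ _ B^T d) (@continuous_norm1_trmx _ _) feas.
exists lam0 => // lam sol.
have [lam_le|lam_gt] := lerP (norm1 lam) (norm1 lam1); first exact: lam0min.
by rewrite (le_trans _ (ltW lam_gt)) // lam0min.
Qed.

Lemma min_norm1_solE m p (B : 'M[R]_(m, p)) d lam0 : B^T *m lam0 = d ->
  (forall lam, B^T *m lam = d -> norm1 lam0 <= norm1 lam) ->
  min_norm1_sol B d = (norm1 lam0)%:E.
Proof.
move=> sol0 lam0min; apply/le_anti/andP; split.
  by apply: ereal_inf_lbound; exists lam0.
by apply: le_ereal_inf_tmp => _ [lam sol <-]; rewrite lee_fin lam0min.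
Qed.

Lemma min_norm1_sol_attained m p (B : 'M[R]_(m, p)) d : (exists lam, B^T *m lam = d) ->
  exists2 lam0, B^T *m lam0 = d & (norm1 lam0)%:E = min_norm1_sol B d.
Proof.
by move=> /norm1_sol_argmin[lam0 sol0 lam0min]; exists lam0; rewrite ?(min_norm1_solE sol0).
Qed.

Lemma hsupp_infnorm_ball m p (B : 'M[R]_(m, p)) d r : 0 < r ->
  hsupp [set e | (infnorm (B *m e) <= r)%R] d = (r%:E * min_norm1_sol B d)%E.
Proof.
move=> r_gt0; have [/norm1_sol_argmin[lam0 sol0 lam0min]|nsol] :=
  pselect (exists lam, B^T *m lam = d).
  rewrite (min_norm1_solE sol0 lam0min) -EFinM; apply/le_anti/andP; split.
    apply: ge_ereal_sup => _ [e e_in <-]; rewrite lee_fin -sol0 dotv_trmx.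
    by rewrite (le_trans (dotv_le_norm1_infnorm _ _)) // mulrC ler_wpM2r ?norm1_ge0.
  exact: hsupp_infnorm_ball_ge.
have -> : min_norm1_sol B d = +oo%E.
  by rewrite /min_norm1_sol [X in ereal_inf X](_ : _ = set0) ?ereal_inf0 //;
    apply/seteqP; split=> // x [lam sol _]; apply: nsol; exists lam.
rewrite gt0_muley ?lte_fin //; apply: eq_infty => x.
have := @hsupp_infnorm_ball_ge _ _ B d r (x / r) r_gt0.
rewrite [r * _]mulrC divfK ?gt_eqF //; apply=> lam sol.
by case: nsol; exists lam.
Qed.

End Separation.

Section Width.
Variables (R : realType) (p : nat).
Implicit Types (C E : set 'cV[R]_p) (d c : 'cV[R]_p).

Lemma width_subset d C1 C2 : C1 `<=` C2 -> (width d C1 <= width d C2)%E.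
Proof.
move=> C12; apply: leeB.
  by apply: ereal_sup_le => _ [x C1x <-]; exists x => //; exact: C12.
by apply: ereal_inf_le_tmp => _ [x C1x <-]; exists x => //; exact: C12.
Qed.

Lemma width_le_twice_hsupp d E C c : E 0 -> (forall e, E e -> E (- e)) ->
  C `<=` [set x | E (x - c)] -> (width d C <= 2%:E * hsupp E d)%E.
Proof.
move=> E0 Esym CE.
have : (0 <= hsupp E d)%E by apply: ereal_sup_ubound; exists 0; rewrite ?dotv0r.
case Eh : (hsupp E d) => [h| |] h_ge0 //; last by rewrite gt0_muley ?leey.
have le_h x : E x -> dotv d x <= h.
  by move=> Ex; rewrite -lee_fin -Eh; apply: ereal_sup_ubound; exists x.
have sup_le : (ereal_sup [set (dotv d x)%:E | x in C] <= (dotv d c + h)%:E)%E.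
  apply: ge_ereal_sup => _ [x /CE Ex <-]; rewrite lee_fin.
  by have := le_h _ Ex; rewrite dotvBr; lra.
have inf_ge : ((dotv d c - h)%:E <= ereal_inf [set (dotv d x)%:E | x in C])%E.
  apply: le_ereal_inf_tmp => _ [x /CE/Esym Ex <-]; rewrite lee_fin.
  by have := le_h _ Ex; rewrite opprB dotvBr; lra.
apply: le_trans (leeB sup_le inf_ge) _.
by rewrite -EFinB -EFinM lee_fin; lra.
Qed.

End Width.

Lemma stack_mulmx (R : pzRingType) Nj c n q (F : 'I_Nj -> 'M[R]_(c, n)) (x : 'M[R]_(n, q)) :
  stack F *m x = stack (fun j => F j *m x).
Proof. by apply/matrixP => i k; rewrite !mxE; apply: eq_bigr => l _; rewrite mxE. Qed.

Lemma stackB (R : zmodType) Nj c n (F G : 'I_Nj -> 'M[R]_(c, n)) :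
  stack F - stack G = stack (fun j => F j - G j).
Proof. by apply/matrixP => i k; rewrite !mxE. Qed.

Lemma infnorm_stack_le (R : realDomainType) Nj c (F : 'I_Nj -> 'cV[R]_c) b :
  0 <= b -> (forall j, infnorm (F j) <= b) -> infnorm (stack F) <= b.
Proof.
move=> b_ge0 Fb; apply: infnorm_le => // i.
by rewrite mxE (le_trans (le_infnorm _ _)) ?Fb.
Qed.

Lemma infnorm_mulmxB_le (R : realDomainType) m p (A : 'M[R]_(m, p)) z x y w :
  infnorm (z - A *m x) <= w -> infnorm (z - A *m y) <= w ->
  infnorm (A *m (x - y)) <= 2 * w.
Proof.
have -> : A *m (x - y) = (z - A *m y) - (z - A *m x).
  by rewrite mulmxBr [RHS]addrC opprB addrA subrK.
by move=> zx zy; rewrite (le_trans (infnormD _ _)) // infnormN; lra.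
Qed.

Unset Implicit Arguments.

Theorem proposition1 (R : realType) (p c Nj : nat)
  (Theta : set 'cV[R]_p) (theta_star : 'cV[R]_p)
  (Phi : 'I_Nj -> 'M[R]_(c, p)) (A A_act : 'M[R]_(Nj * c, p))
  (zs ws : 'I_Nj -> 'cV[R]_c) (wbar : R) :
  Theta theta_star ->
  A = stack Phi ->
  A_act = A ->
  0 < wbar ->
  (forall j, zs j = Phi j *m theta_star + ws j) ->
  (forall j, infnorm (ws j) <= wbar) ->
  let z := stack zs in
  let Theta_act := [set th | Theta th /\ infnorm (z - A_act *m th) <= wbar] in
  let E := [set e : 'cV[R]_p | infnorm (A *m e) <= 2 * wbar] in
  let Theta_N := [set th | Theta th /\ E (th - theta_star)] in
  forall d : 'cV[R]_p, unit_dir d ->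
    (width d Theta_act <= width d Theta_N)%E /\
    (width d Theta_N <= Order.min (width d Theta) (2%:E * hsupp E d))%E /\
    hsupp E d =
      ((2 * wbar)%:E *
         ereal_inf [set (norm1 lam)%:E | lam in [set lam : 'cV[R]_(Nj * c) | A^T *m lam = d]])%E /\
    ((exists lam : 'cV[R]_(Nj * c), A^T *m lam = d) ->
      exists2 lam0 : 'cV[R]_(Nj * c), A^T *m lam0 = d &
        ((norm1 lam0)%:E = ereal_inf [set (norm1 lam)%:E | lam in [set lam : 'cV[R]_(Nj * c) | A^T *m lam = d]])%E).
Proof.
move=> _ A_stack A_act_eq wbar_gt0 z_model w_bound z Theta_act E Theta_N d _.
have star_residual : infnorm (z - A *m theta_star) <= wbar.
  rewrite /z A_stack stack_mulmx stackB; apply: infnorm_stack_le => [|j]; first exact: ltW.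
  by rewrite z_model addrC addKr; exact: w_bound.
have act_sub_N : Theta_act `<=` Theta_N.
  move=> th [Theta_th th_residual]; split=> //.
  by apply: infnorm_mulmxB_le star_residual; rewrite -A_act_eq.
have E0 : E 0 by rewrite /E /= mulmx0 infnorm0 mulr_ge0 ?ltW.
have Esym e : E e -> E (- e) by rewrite /E /= mulmxN infnormN.
have wbar2_gt0 : 0 < 2 * wbar by rewrite mulr_gt0.
split; first exact: width_subset.
split.
  rewrite le_min width_subset /=; last by move=> th [].
  by apply: (@width_le_twice_hsupp _ _ d E Theta_N theta_star) => // th [].
split; first exact: hsupp_infnorm_ball.
exact: min_norm1_sol_attained.
Qed.
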